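(* Let $k\ge 2$, let $R\subset\mathbb{N}^k$ be a simple and closed region (in the sense of the context), with boundary $B$. For every $y\in B$ and $i\in\{1,\dots,k\}$ define $\hat p_i(y)=k_i^{\ast}(y)/k(y)$. Then for each $i$, $\hat p_i$ is the unique bounded unbiased estimator of $p_i$; that is, if $U:B\to\mathbb{R}$ is bounded and satisfies $\sum_{y\in B}U(y)\,\mathbb{P}_p(y)=p_i$ for every parameter vector $p=(p_1,\dots,p_k)$ with all $p_j>0$ and $\sum_j p_j=1$, then $U(y)=\hat p_i(y)$ for every $y\in B$.
   Context: A repeated independent experiment has $k$ possible outcomes with probabilities $p_1,\dots,p_k$ ($p_j>0$, $\sum_j p_j=1$). Let $X_n=(x_n^1,\dots,x_n^k)$, where $x_n^i\in\mathbb{N}$ counts the occurrences of outcome $i$ among the first $n$ repetitions; thus $X_0=0$ and each step adds a standard unit vector $e_i$ with probability $p_i$. Let $S_n\subset\mathbb{R}^k$ be the set of points with nonnegative coordinates summing to $n$, and $S_n^{\mathbb{N}}=S_n\cap\mathbb{N}^k$. Given a region $R\subset\mathbb{N}^k$ (the accessible region, containing the origin), its boundary $B$ is the set of points not in $R$ that can be reached in one step (by adding some $e_i$) from a point of $R$. The process is observed until it first reaches $B$. For $y=(y_1,\dots,y_k)\in B$, $k(y)$ is the number of lattice paths (with unit steps $e_i$) from the origin to $y$ all of whose points other than $y$ lie in $R$, and $k_i^{\ast}(y)$ is the number of such paths that start instead at the point $e_i$ (the point with $i$-th coordinate $1$ and others $0$). The probability that the first hitting of $B$ occurs at $y$ is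 $\mathbb{P}_p(y)=k(y)\,p_1^{y_1}\cdots p_k^{y_k}$. $R$ is closed if $\sum_{y\in B}\mathbb{P}_p(y)=1$. Setting $R_n=R\cap S_n^{\mathbb{N}}$ (accessible points of order $n$), the points of $S_n^{\mathbb{N}}\setminus R_n$ are called inaccessible and $B_n=B\cap S_n^{\mathbb{N}}$ are the boundary points of order $n$. $R$ is simple if for every $n$ the convex hull of $R_n$ in $\mathbb{R}^k$ contains no inaccessible point of order $n$. *)

From HB Require Import structures.
From mathcomp Require Import all_boot all_order all_algebra.
From mathcomp Require Import all_classical all_reals all_analysis.
Set Implicit Arguments. Unset Strict Implicit. Unset Printing Implicit Defensive.
Import Order.TTheory GRing.Theory Num.Theory.
Import numFieldNormedType.Exports.
Local Open Scope classical_set_scope.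
Local Open Scope ring_scope.

Definition pt (k : nat) := {ffun 'I_k -> nat}.
Definition origin k : pt k := [ffun => 0%N].
Definition unitv k (i : 'I_k) : pt k := [ffun c => nat_of_bool (c == i)].
Definition order k (x : pt k) : nat := (\sum_(c < k) x c)%N.

(* A lattice path is given by its start point a and its sequence of unit steps s;
   pos a s j is its j-th point (after j steps). *)
Definition pos k (a : pt k) (s : seq 'I_k) (j : nat) : pt k :=
  [ffun c => (a c + count_mem c (take j s))%N].

(* s (with n steps) leads from a to y, and all points other than the endpoint
   (points 0..n-1) lie in R. *)
Definition good_path k (R : pred (pt k)) (a y : pt k) n (s : n.-tuple 'I_k) : bool :=
  (pos a s n == y) && [forall j : 'I_n, R (pos a s j)].

Definition npaths k (R : pred (pt k)) (a y : pt k) n : nat :=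
  #|[set s : n.-tuple 'I_k | good_path R a y s]|.

Definition kcount k (R : pred (pt k)) (y : pt k) : nat :=
  npaths R (origin k) y (order y).
Definition kstar k (R : pred (pt k)) (i : 'I_k) (y : pt k) : nat :=
  npaths R (unitv i) y (order y).-1.

Definition inB k (R : pred (pt k)) (y : pt k) : bool :=
  ~~ R y && [exists i : 'I_k, (0 < y i)%N && R [ffun c => (y c - nat_of_bool (c == i))%N]].

Definition accessible_region k (R : pred (pt k)) : Prop :=
  R (origin k) /\ forall x, R x -> (0 < kcount R x)%N.

(* points of order n all lie in the box {0..n}^k *)
Definition box_pt k n (x : {ffun 'I_k -> 'I_n.+1}) : pt k := [ffun c => nat_of_ord (x c)].

Definition level_sum (Rr : realType) k (P : pred (pt k)) n (f : pt k -> Rr) : Rr :=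
  \sum_(x : {ffun 'I_k -> 'I_n.+1} | (order (box_pt x) == n) && P (box_pt x)) f (box_pt x).

Definition is_param (Rr : realType) k (p : 'I_k -> Rr) : Prop :=
  (forall j, 0 < p j) /\ \sum_(j < k) p j = 1.

Definition probP (Rr : realType) k (R : pred (pt k)) (p : 'I_k -> Rr) (y : pt k) : Rr :=
  (kcount R y)%:R * \prod_(c < k) p c ^+ y c.

(* sum_{y in B} f(y) = l, the (countable) sum being taken level by level *)
Definition sumB (Rr : realType) k (R : pred (pt k)) (f : pt k -> Rr) (l : Rr) : Prop :=
  (fun N : nat => \sum_(n < N) level_sum (inB R) n f) @ \oo --> l.

Definition closed_region (Rr : realType) k (R : pred (pt k)) : Prop :=
  forall p : 'I_k -> Rr, is_param p -> sumB R (probP R p) 1.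

Definition in_hull (Rr : realType) k (R : pred (pt k)) n (z : pt k) : Prop :=
  exists lam : {ffun 'I_k -> 'I_n.+1} -> Rr,
    (forall x, 0 <= lam x) /\
    (forall x, ~~ ((order (box_pt x) == n) && R (box_pt x)) -> lam x = 0) /\
    \sum_x lam x = 1 /\
    (forall c, \sum_x lam x * (box_pt x c)%:R = (z c)%:R).

Definition simple_region (Rr : realType) k (R : pred (pt k)) : Prop :=
  forall n (z : pt k), order z = n -> ~~ R z -> ~ in_hull Rr R n z.

Definition phat (Rr : realType) k (R : pred (pt k)) (i : 'I_k) (y : pt k) : Rr :=
  (kstar R i y)%:R / (kcount R y)%:R.

Definition bounded_on_B (Rr : realType) k (R : pred (pt k)) (U : pt k -> Rr) : Prop :=
  exists M : Rr, forall y, inB R y -> `|U y| <= M.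

Definition unbiased_for (Rr : realType) k (R : pred (pt k)) (i : 'I_k) (U : pt k -> Rr) : Prop :=
  forall p : 'I_k -> Rr, is_param p -> sumB R (fun y => U y * probP R p y) (p i).

(* The estimator [phat] is unbiased because the walk started at [e_i] has mass
   [p_i], its exits are exactly the boundary terms [k_i^*(y) p^y], and it survives
   with vanishing probability since the region is closed.  For uniqueness, let [D]
   be the difference of two bounded unbiased estimators and [n] the least order of
   a boundary point with [D <> 0].  Unbiasedness for zero and boundedness bound the
   order-[n] terms of [D] by [M] times the mass of [R_n].  Simplicity puts no such
   point in the convex hull of [R_n], so one of them, [y0], is exposed by a linear
   functional [a] among [R_n] and these points; under [p ~ exp (t a)] with [t]
   large the term of [y0] outweighs all others, a contradiction. *)

From mathcomp Require Import all_boot all_order all_algebra.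
From mathcomp Require Import all_classical all_reals all_analysis.
From mathcomp Require Import ring lra.
Import Order.TTheory GRing.Theory Num.Theory.
Import numFieldNormedType.Exports.
Set Implicit Arguments. Unset Strict Implicit. Unset Printing Implicit Defensive.
Local Open Scope ring_scope.

Section Farkas.
Variables (Rr : realType) (D X : finType).
Implicit Types (f : X -> D -> Rr) (u v w : D -> Rr).

Definition dot u v : Rr := \sum_c u c * v c.

Lemma dot_combl u v w s t :
  dot (fun c => s * u c - t * v c) w = s * dot u w - t * dot v w.
Proof. by rewrite /dot !mulr_sumr -sumrB; apply: eq_bigr => c _; ring. Qed.

Lemma dot_combr w u v s t :
  dot w (fun c => s * u c - t * v c) = s * dot w u - t * dot w v.
Proof. by rewrite /dot !mulr_sumr -sumrB; apply: eq_bigr => c _; ring. Qed.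

Lemma dot_sumr (y : D -> Rr) (mu : X -> Rr) f :
  dot y (fun c => \sum_x mu x * f x c) = \sum_x mu x * dot y (f x).
Proof.
rewrite /dot; under eq_bigr => c _ do rewrite mulr_sumr.
rewrite exchange_big /=; apply: eq_bigr => x _; rewrite mulr_sumr.
by apply: eq_bigr => c _; ring.
Qed.

Lemma dot_self_ge0 u : 0 <= dot u u.
Proof. by apply: sumr_ge0 => c _; rewrite -expr2 sqr_ge0. Qed.

Lemma dot_self_eq0 u : dot u u = 0 -> u =1 (fun=> 0).
Proof.
move=> h0 c; have hsq c' : 0 <= u c' * u c' by rewrite -expr2 sqr_ge0.
have /eqP := @psumr_eq0P _ _ _ _ (fun c' _ => hsq c') h0 c isT.
by rewrite mulf_eq0 orbb => /eqP.
Qed.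

Definition in_cone (Q : {set X}) f (b : D -> Rr) :=
  exists mu : X -> Rr, (forall x, 0 <= mu x) /\ (forall x, x \notin Q -> mu x = 0) /\
    (forall c, \sum_x mu x * f x c = b c).

(* Fourier-Motzkin elimination of the generator [x0] along [y]. *)
Lemma in_cone_eliminate (Q : {set X}) f b x0 (y : D -> Rr) :
  x0 \in Q -> dot y b < 0 -> dot y (f x0) < 0 ->
  (forall x, x \in Q :\ x0 -> 0 <= dot y (f x)) ->
  in_cone (Q :\ x0) (fun x c => dot y (f x0) * f x c - dot y (f x) * f x0 c)
                    (fun c => dot y (f x0) * b c - dot y b * f x0 c) ->
  in_cone Q f b.
Proof.
set al := dot y (f x0) => hx0 hyb hal hyQ [mu [mu_ge0 [mu_out mu_comb]]].
pose S := \sum_x mu x * dot y (f x).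
have S_ge0 : 0 <= S.
  apply: sumr_ge0 => x _; case: (boolP (x \in Q :\ x0)) => hx.
    by apply: mulr_ge0 => //; apply: hyQ.
  by rewrite mu_out // mul0r.
pose th := (dot y b - S) / al.
have th_ge0 : 0 <= th by apply: mulr_le0; [lra | rewrite invr_le0 ltW].
exists (fun x => mu x + (x == x0)%:R * th); split.
  by move=> x; apply: addr_ge0 => //; apply: mulr_ge0.
split.
  move=> x hx; rewrite mu_out; last by rewrite !inE negb_and hx orbT.
  by case: (eqVneq x x0) hx => [->|_]; rewrite ?hx0 // mul0r addr0.
move=> c; have := mu_comb c.
have -> : \sum_x mu x * (al * f x c - dot y (f x) * f x0 c) =
    al * (\sum_x mu x * f x c) - S * f x0 c.
  by rewrite mulr_sumr mulr_suml -sumrB; apply: eq_bigr => x _; ring.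
move=> e; under eq_bigr => x _ do rewrite mulrDl.
rewrite big_split /= [X in _ + X](bigD1 x0) //= eqxx mul1r.
rewrite [X in _ + (_ + X)]big1 ?addr0 => [|x /negbTE ->]; last by rewrite !mul0r.
have al_th : al * th = dot y b - S by rewrite /th mulrC divfK ?ltr0_neq0.
apply: (mulfI (ltr0_neq0 hal)); rewrite mulrDr mulrA al_th mulrBl; lra.
Qed.

Lemma farkas (Q : {set X}) f b : ~ in_cone Q f b ->
  exists y : D -> Rr, dot y b < 0 /\ forall x, x \in Q -> 0 <= dot y (f x).
Proof.
move: (erefl #|Q|); move: {2}#|Q| => n.
elim: n Q f b => [|n IH] Q f b hQ hnc.
  have [c0 bc0|b0] := pickP (fun c => b c != 0); last first.
    exfalso; apply: hnc; exists (fun=> 0); split=> //; split=> // c.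
    by rewrite big1 => [|x _]; [have /negbFE/eqP -> := b0 c | rewrite mul0r].
  exists (fun c => - b c); split; last by move=> x; rewrite (card0_eq hQ).
  rewrite /dot; under eq_bigr do rewrite mulNr; rewrite sumrN oppr_lt0 (bigD1 c0) //=.
  apply: ltr_pwDl; first by rewrite -expr2 exprn_even_gt0.
  by apply: sumr_ge0 => c _; rewrite -expr2 sqr_ge0.
have /card_gt0P[x0 hx0] : (0 < #|Q|)%N by rewrite hQ.
have hQ' : #|Q :\ x0| = n by move: hQ; rewrite (cardsD1 x0) hx0 add1n => -[].
have [y [yb yQ]] : exists y : D -> Rr,
    dot y b < 0 /\ forall x, x \in Q :\ x0 -> 0 <= dot y (f x).
  apply: IH hQ' _ => -[mu [mu_ge0 [mu_out mu_comb]]]; apply: hnc.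
  exists mu; split=> //; split=> // x hx.
  by apply: mu_out; rewrite !inE negb_and hx orbT.
have [yx0|yx0] := lerP 0 (dot y (f x0)).
  exists y; split=> // x hx; have [->//|hne] := eqVneq x x0.
  by apply: yQ; rewrite !inE hne hx.
set al := dot y (f x0) in yx0.
have [y' [y'b y'Q]] := IH _ _ _ hQ' (fun h => hnc (in_cone_eliminate hx0 yb yx0 yQ h)).
exists (fun c => al * y' c - dot y' (f x0) * y c); split.
  by move: y'b; rewrite dot_combl dot_combr [dot y b * _]mulrC.
move=> x hx; rewrite dot_combl; have [->|hne] := eqVneq x x0.
  by rewrite -/al mulrC subrr.
have := y'Q x; rewrite !inE hne hx /= => /(_ isT).
by rewrite dot_combr [dot y (f x) * _]mulrC.
Qed.

End Farkas.

Section ConvexHull.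
Variables (Rr : realType) (D X : finType).
Implicit Types (f : X -> D -> Rr) (a : D -> Rr).

Definition in_conv (Q : pred X) f (z : D -> Rr) : Prop :=
  exists lam : X -> Rr, (forall x, 0 <= lam x) /\ (forall x, ~~ Q x -> lam x = 0) /\
    \sum_x lam x = 1 /\ (forall c, \sum_x lam x * f x c = z c).

Lemma sum_option (V : nmodType) (T : finType) (G : option T -> V) :
  \sum_o G o = G None + \sum_c G (Some c).
Proof.
rewrite (bigD1 None) //=; congr (_ + _).
rewrite (reindex_omap Some id) //=; last by case.
by apply: eq_bigl => c; rewrite eqxx.
Qed.

(* Homogenize: [z] is in the hull iff [(z, 1)] is in the cone of the [(f x, 1)]. *)
Lemma separate_from_conv (Q : pred X) f z :
  ~ in_conv Q f z -> exists a, forall x, Q x -> dot a (f x) < dot a z.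
Proof.
move=> hnc.
pose g x (o : option D) := if o is Some c then f x c else 1.
pose b (o : option D) := if o is Some c then z c else 1.
have [y [yb yQ]] : exists y : option D -> Rr,
    dot y b < 0 /\ forall x, x \in [set x | Q x] -> 0 <= dot y (g x).
  apply: farkas => -[mu [mu_ge0 [mu_out mu_comb]]]; apply: hnc.
  exists mu; split=> //; split; first by move=> x hx; apply: mu_out; rewrite inE.
  split; last by move=> c; exact: (mu_comb (Some c)).
  by have := mu_comb None; under eq_bigr do rewrite mulr1.
exists (fun c => - y (Some c)) => x hx.
have := yQ x; rewrite inE hx => /(_ isT).
move: yb; rewrite /dot !sum_option /=.
have sumN u : \sum_c - y (Some c) * u c = - \sum_c y (Some c) * u c.
  by rewrite -sumrN; apply: eq_bigr => c _; rewrite mulNr.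
rewrite !sumN; lra.
Qed.

Lemma farthest_not_in_conv (T : pred X) f y0 : injective f ->
  (forall x, T x -> dot (f x) (f x) <= dot (f y0) (f y0)) ->
  ~ in_conv [pred x | T x && (x != y0)] f (f y0).
Proof.
move=> finj hfar [lam [lam_ge0 [lam_out [lam1 lam_comb]]]].
have lamP x : lam x != 0 -> T x && (x != y0) by apply: contraNT => /lam_out ->.
have comb : (fun c => \sum_x lam x * f x c) = f y0 by apply: boolp.funext.
pose d x c := f x c - f y0 c.
(* The variance of the combination is [sum lam |f x|^2 - |f y0|^2 <= 0]. *)
have var_eq : \sum_x lam x * dot (d x) (d x) =
    \sum_x lam x * dot (f x) (f x) - dot (f y0) (f y0).
  have dd x : dot (d x) (d x) =
      dot (f x) (f x) - 2 * dot (f y0) (f x) + dot (f y0) (f y0).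
    by rewrite /dot mulr_sumr -sumrB -big_split; apply: eq_bigr => c _ /=; rewrite /d; ring.
  under eq_bigr => x _ do rewrite dd.
  rewrite (eq_bigr (fun x => lam x * dot (f x) (f x) - 2 * (lam x * dot (f y0) (f x))
            + dot (f y0) (f y0) * lam x)); last by move=> x _; ring.
  rewrite big_split /= sumrB -mulr_sumr -mulr_sumr lam1 mulr1 -dot_sumr comb; ring.
have var_le : \sum_x lam x * dot (f x) (f x) <= dot (f y0) (f y0).
  rewrite -[X in _ <= X]mul1r -lam1 mulr_suml; apply: ler_sum => x _.
  have [->|hx] := eqVneq (lam x) 0; first by rewrite !mul0r.
  by apply: ler_wpM2l => //; case/andP: (lamP x hx) => /hfar.
have var_ge0 x : 0 <= lam x * dot (d x) (d x) by apply: mulr_ge0 => //; apply: dot_self_ge0.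
have var0 : \sum_x lam x * dot (d x) (d x) = 0.
  apply/eqP; rewrite eq_le; apply/andP; split; last exact: sumr_ge0.
  by rewrite var_eq subr_le0.
suff : \sum_x lam x = 0 by rewrite lam1 => /eqP; rewrite oner_eq0.
apply: big1 => x _; apply/eqP; apply: contraT => hx.
have /eqP := @psumr_eq0P _ _ _ _ (fun x _ => var_ge0 x) var0 x isT.
rewrite mulf_eq0 (negbTE hx) /= => /eqP /dot_self_eq0 dx0.
have xy0 : x = y0.
  by apply: finj; apply: boolp.funext => c; apply/eqP; rewrite -subr_eq0; apply/eqP/dx0.
by case/andP: (lamP x hx); rewrite xy0 eqxx.
Qed.

(* Among the points of [S] maximizing a functional separating [S] from the hull of
   [Rn], take one farthest from the origin: it is exposed in [Rn] and [S]. *)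
Lemma exposed_point f (Rn S : pred X) x1 : injective f -> S x1 ->
  (forall x, S x -> ~ in_conv Rn f (f x)) ->
  exists2 y0, S y0 & exists a,
    forall x, Rn x || S x -> x != y0 -> dot a (f x) < dot a (f y0).
Proof.
move=> finj Sx1 hs; have [a ha] := separate_from_conv (hs x1 Sx1).
case: (@arg_maxP _ _ _ x1 S (fun x => dot a (f x))) => // y1 Sy1 hy1.
pose S1 := [pred x | S x && (dot a (f x) == dot a (f y1))].
case: (@arg_maxP _ _ _ y1 S1 (fun x => dot (f x) (f x))) => [|y0 S1y0 hy0].
  by rewrite /S1 /= Sy1 eqxx.
have /andP[Sy0 /eqP ay0] := S1y0; exists y0 => //.
have [a' ha'] : exists a', forall x, (Rn x || S x) && (x != y0) ->
    dot a' (f x) < dot a' (f y0).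
  apply: separate_from_conv => -[lam [lam_ge0 [lam_out [lam1 lam_comb]]]].
  have lamP x : lam x != 0 -> (Rn x || S x) && (x != y0).
    by apply: contraNT => /lam_out ->.
  have comb : (fun c => \sum_x lam x * f x c) = f y0 by apply: boolp.funext.
  set m := dot a (f y0).
  have gap_ge0 x : 0 <= lam x * (m - dot a (f x)).
    have [->|hx] := eqVneq (lam x) 0; first by rewrite mul0r.
    apply: mulr_ge0 => //; rewrite subr_ge0 /m ay0.
    case/andP: (lamP x hx) => /orP[hR|hS] _; last exact: hy1.
    exact/ltW/(lt_le_trans (ha x hR))/hy1.
  have gap0 : \sum_x lam x * (m - dot a (f x)) = 0.
    rewrite (eq_bigr (fun x => m * lam x - lam x * dot a (f x))) => [|x _]; last by ring.
    by rewrite sumrB -mulr_sumr lam1 mulr1 -dot_sumr comb subrr.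
  have lamS1 x : lam x != 0 -> S1 x && (x != y0).
    move=> hx; have /eqP := @psumr_eq0P _ _ _ _ (fun x _ => gap_ge0 x) gap0 x isT.
    rewrite mulf_eq0 (negbTE hx) /= subr_eq0 => /eqP e.
    case/andP: (lamP x hx) => /orP[hR|hS] ->; last by rewrite /S1 /= hS -ay0 -/m e eqxx.
    by have := ha x hR; rewrite -e /m ay0 => /lt_le_trans/(_ (hy1 _ Sx1)); rewrite ltxx.
  apply: (farthest_not_in_conv finj hy0).
  exists lam; split=> //; split=> [x|]; last by split.
  by apply: contraNeq => /lamS1.
by exists a' => x hx hne; apply: ha'; rewrite hx hne.
Qed.

End ConvexHull.

Lemma sum_tuple0 (V : nmodType) (T : finType) (G : 0.-tuple T -> V) :
  \sum_(s : 0.-tuple T) G s = G [tuple].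
Proof.
by rewrite (big_pred1 [tuple]) // => s; rewrite /= [s]tuple0; apply/esym/eqP.
Qed.

Lemma sum_tuple_cons (V : nmodType) (T : finType) m (G : m.+1.-tuple T -> V) :
  \sum_(s : m.+1.-tuple T) G s = \sum_(c : T) \sum_(t : m.-tuple T) G [tuple of c :: t].
Proof.
rewrite pair_big /= (reindex (fun q : T * m.-tuple T => [tuple of q.1 :: q.2])) //=.
exists (fun s : m.+1.-tuple T => (thead s, [tuple of behead s])).
  by move=> [c t] _ /=; congr pair; apply/val_inj.
by move=> s _; rewrite [RHS]tuple_eta; apply/val_inj.
Qed.

Section LatticePaths.
Variable k : nat.
Implicit Types (a y z : pt k) (s : seq 'I_k).

Definition add_unitv a (c : 'I_k) : pt k := [ffun x => (a x + (x == c))%N].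

Lemma add_unitv_origin (i : 'I_k) : add_unitv (origin k) i = unitv i.
Proof. by apply/ffunP => x; rewrite !ffunE. Qed.

Lemma pos_cons0 a c s : pos a (c :: s) 0 = a.
Proof. by apply/ffunP => x; rewrite !ffunE /= addn0. Qed.

Lemma pos_consS a c s j : pos a (c :: s) j.+1 = pos (add_unitv a c) s j.
Proof. by apply/ffunP => x; rewrite !ffunE /= addnA eq_sym. Qed.

Lemma pos_full a m (s : m.-tuple 'I_k) j : (m <= j)%N -> pos a s j = pos a s m.
Proof. by move=> hj; apply/ffunP => x; rewrite !ffunE !take_oversize // size_tuple. Qed.

Lemma pos_rcons a s c j : (j <= size s)%N -> pos a (rcons s c) j = pos a s j.
Proof. by move=> hj; apply/ffunP => x; rewrite !ffunE -cats1 takel_cat. Qed.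

Lemma pos_rcons_last a s c :
  pos a (rcons s c) (size s).+1 = add_unitv (pos a s (size s)) c.
Proof.
apply/ffunP => x; rewrite !ffunE take_oversize ?size_rcons // take_oversize //.
by rewrite -cats1 count_cat /= addn0 addnA eq_sym.
Qed.

Lemma pos_step a s j x0 : (j < size s)%N ->
  pos a s j.+1 = add_unitv (pos a s j) (nth x0 s j).
Proof.
move=> hj; apply/ffunP => x; rewrite !ffunE (take_nth x0 hj).
by rewrite -cats1 count_cat /= addn0 addnA eq_sym.
Qed.

Lemma sum_count_mem s : (\sum_(c < k) count_mem c s)%N = size s.
Proof.
elim: s => [|x s IH] /=; first by rewrite big1.
rewrite big_split /= IH -add1n; congr (_ + _)%N.
by rewrite (bigD1 x) //= eqxx big1 // => c /negbTE; rewrite eq_sym => ->.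
Qed.

Lemma order_pos a m (s : m.-tuple 'I_k) : order (pos a s m) = (order a + m)%N.
Proof.
rewrite /order; under eq_bigr => c _ do rewrite ffunE.
by rewrite big_split /= take_oversize ?size_tuple // sum_count_mem size_tuple.
Qed.

Lemma order_origin : order (origin k) = 0%N.
Proof. by rewrite /order big1 // => c _; rewrite ffunE. Qed.

Lemma order_add_unitv a c : order (add_unitv a c) = (order a).+1.
Proof.
rewrite /order; under eq_bigr => x _ do rewrite ffunE.
rewrite big_split /= -addn1; congr (_ + _)%N.
by rewrite (bigD1 c) //= eqxx big1 // => x /negbTE ->.
Qed.

Lemma order_unitv (i : 'I_k) : order (unitv i) = 1%N.
Proof. by rewrite -add_unitv_origin order_add_unitv order_origin. Qed.

Lemma coord_le_order y c : (y c <= order y)%N.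
Proof. by rewrite /order (bigD1 c) //= leq_addr. Qed.

Lemma order_eq0 y : order y = 0%N -> y = origin k.
Proof.
move=> h; apply/ffunP => c; rewrite ffunE; apply/eqP; rewrite -leqn0 -h.
exact: coord_le_order.
Qed.

Lemma box_pt_inj n : injective (@box_pt k n).
Proof.
move=> x y /ffunP h; apply/ffunP => c; apply/val_inj.
by have := h c; rewrite !ffunE.
Qed.

Definition to_box n y : {ffun 'I_k -> 'I_n.+1} := [ffun c => inord (y c)].

Lemma to_boxK n y : order y = n -> box_pt (to_box n y) = y.
Proof.
move=> hy; apply/ffunP => c; rewrite !ffunE inordK // ltnS -hy.
exact: coord_le_order.
Qed.

Lemma exists_minimal_order (Q : pred (pt k)) : (exists y, Q y) ->
  exists2 y, Q y & forall z, Q z -> (order y <= order z)%N.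
Proof.
move=> [y Qy].
pose P n := [exists x : {ffun 'I_k -> 'I_n.+1}, (order (box_pt x) == n) && Q (box_pt x)].
have inP z : Q z -> P (order z).
  by move=> Qz; apply/existsP; exists (to_box (order z) z); rewrite to_boxK ?eqxx.
case: (ex_minnP (ex_intro P _ (inP y Qy))) => n /existsP[x /andP[/eqP xn Qx]] hmin.
by exists (box_pt x) => // z /inP/hmin; rewrite xn.
Qed.

End LatticePaths.

Section PathCounts.
Variables (k : nat) (R : pred (pt k)).
Hypothesis R0 : R (origin k).

Lemma npathsE a y n :
  npaths R a y n = #|[pred s : n.-tuple 'I_k | good_path R a y s]|.
Proof. by apply: eq_card => s; rewrite /in_mem /=; apply/asboolP/idP. Qed.

(* Prefixing the step [i] embeds the paths counted by [kstar] into those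
   counted by [kcount]. *)
Lemma kstar_le i y : (kstar R i y <= kcount R y)%N.
Proof.
rewrite /kstar /kcount !npathsE.
have [y0|] := eqVneq (order y) 0%N.
  rewrite (_ : #|_| = 0)%N //; apply: eq_card0 => s; rewrite inE /good_path.
  by apply/negP => /andP[/eqP h _]; move: y0; rewrite -h order_pos order_unitv.
rewrite -lt0n => /prednK; move: (order y).-1 => m <-.
have inj : injective (fun s : m.-tuple 'I_k => [tuple of i :: s]).
  by move=> s t /(congr1 val) [] /val_inj.
rewrite -(card_imset _ inj); apply: subset_leq_card.
apply/fintype.subsetP => t /imsetP[s + ->]; rewrite !inE /good_path.
case/andP=> hy /forallP hR; rewrite /= pos_consS add_unitv_origin hy /=.
apply/forallP => -[[|j] hj] /=; first by rewrite pos_cons0.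
by rewrite pos_consS add_unitv_origin; exact: (hR (Ordinal (hj : (j < m)%N))).
Qed.

(* The last step of a path reaching [y] leaves [R] from a point of [R]. *)
Lemma inB_of_kcount y : (0 < kcount R y)%N -> ~~ R y -> inB R y.
Proof.
move=> /card_gt0P[s]; rewrite /in_mem /= => /asboolP.
rewrite /good_path => /andP[/eqP hy /forallP hR] hny.
rewrite /inB hny /=; move: s hy hR; case ey: (order y) => [|m] s hy hR.
  by move: hny; rewrite -hy (_ : pos _ _ 0 = origin k) ?R0 //;
    apply/ffunP => x; rewrite !ffunE take0.
have hm : (m < size s)%N by rewrite size_tuple.
apply/existsP; exists (nth (tnth s ord_max) s m).
have e := pos_step (origin k) (tnth s ord_max) hm.
have -> : [ffun c => (y c - (c == nth (tnth s ord_max) s m))%N] = pos (origin k) s m.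
  by apply/ffunP => x; rewrite ffunE -hy e !ffunE addnK.
by rewrite -hy e !ffunE eqxx addn1 /=; exact: (hR (Ordinal (ltnSn m))).
Qed.

(* A path to the predecessor [z] of [y] in [R], extended by one step. *)
Lemma kcount_gt0 y : (forall z, R z -> (0 < kcount R z)%N) ->
  inB R y -> (0 < kcount R y)%N.
Proof.
move=> hacc /andP[hny /existsP[c /andP[yc0 hz]]].
set z := [ffun _ => _] in hz.
have yz : y = add_unitv z c.
  apply/ffunP => x; rewrite !ffunE; have [->|hx] := eqVneq x c; first by rewrite subnK.
  by rewrite subn0 addn0.
have := hacc z hz; rewrite /kcount yz order_add_unitv !npathsE => /card_gt0P[s].
rewrite inE /good_path => /andP[/eqP hs /forallP hR].
apply/card_gt0P; exists [tuple of rcons s c]; rewrite inE /good_path.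
have sz : size s = order z by rewrite size_tuple.
apply/andP; split.
  rewrite /= (_ : (order z).+1 = (size s).+1); last by rewrite sz.
  by rewrite pos_rcons_last (pos_full _ _ (eq_leq (esym sz))) hs.
apply/forallP => -[j hj] /=; rewrite pos_rcons ?sz //.
move: hj; rewrite ltnS leq_eqVlt => /orP[/eqP ->|hjz]; first by rewrite hs.
exact: (hR (Ordinal hjz)).
Qed.

End PathCounts.

Section Walks.
Variables (Rr : realType) (k : nat) (R : pred (pt k)) (p : 'I_k -> Rr).
Implicit Types (a y : pt k) (F : pt k -> Rr).

Definition monomial y : Rr := \prod_(c < k) p c ^+ y c.
Definition alive y : Rr := (R y)%:R.
Definition exited y : Rr := (~~ R y)%:R.

(* [p^a] times the expectation of [F] at time [m] for the walk started at [a],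
   restricted to the event that it stays in [R] before time [m]. *)
Definition walk_sum m a F : Rr :=
  \sum_(s : m.-tuple 'I_k | [forall j : 'I_m, R (pos a s j)])
     F (pos a s m) * monomial (pos a s m).

Lemma monomial_add_unitv a c : monomial (add_unitv a c) = monomial a * p c.
Proof.
rewrite /monomial (bigD1 c) //= [in RHS](bigD1 c) //= -mulrA [_ * p c]mulrC mulrA.
rewrite !ffunE eqxx exprD expr1 -!mulrA; congr (_ * (_ * _)).
by apply: eq_bigr => x hx; rewrite !ffunE (negbTE hx) addn0.
Qed.

Lemma monomial_origin : monomial (origin k) = 1.
Proof. by rewrite /monomial big1 // => c _; rewrite ffunE expr0. Qed.

Lemma monomial_unitv i : monomial (unitv i) = p i.
Proof. by rewrite -add_unitv_origin monomial_add_unitv monomial_origin mul1r. Qed.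

Lemma monomial_ge0 y : (forall c, 0 <= p c) -> 0 <= monomial y.
Proof. by move=> p_ge0; apply: prodr_ge0 => c _; apply: exprn_ge0. Qed.

Lemma monomial_gt0 y : (forall c, 0 < p c) -> 0 < monomial y.
Proof. by move=> p_gt0; apply: prodr_gt0 => c _; apply: exprn_gt0. Qed.

Lemma walk_sum0 a F : walk_sum 0 a F = F a * monomial a.
Proof.
rewrite /walk_sum big_mkcond sum_tuple0 /=.
have -> : [forall j : 'I_0, R (pos a [tuple] j)] by apply/forallP => -[].
by rewrite (_ : pos a [tuple] 0 = a) //; apply/ffunP => x; rewrite !ffunE addn0.
Qed.

Lemma walk_sumS m a F :
  walk_sum m.+1 a F = (R a)%:R * \sum_c walk_sum m (add_unitv a c) F.
Proof.
rewrite /walk_sum big_mkcond sum_tuple_cons mulr_sumr; apply: eq_bigr => c _.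
rewrite big_mkcond mulr_sumr [RHS]big_mkcond; apply: eq_bigr => t _ /=.
have -> : [forall j : 'I_m.+1, R (pos a [tuple of c :: t] j)] =
          R a && [forall j : 'I_m, R (pos (add_unitv a c) t j)].
  apply/forallP/andP => [h|[ha /forallP h] j].
    split; first by have := h ord0; rewrite /= pos_cons0.
    by apply/forallP => j; have := h (lift ord0 j); rewrite /= pos_consS.
  case: j => -[|j] hj /=; first by rewrite pos_cons0.
  by rewrite pos_consS; exact: (h (Ordinal (hj : (j < m)%N))).
rewrite /= pos_consS.
by case: (R a); case: [forall _, _]; rewrite ?mul1r ?mul0r.
Qed.

Lemma walk_sum_ge0 m a F : (forall c, 0 <= p c) -> (forall y, 0 <= F y) ->
  0 <= walk_sum m a F.
Proof.
by move=> p_ge0 F_ge0; apply: sumr_ge0 => s _; apply: mulr_ge0 => //; apply: monomial_ge0.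
Qed.

Lemma alive_ge0 y : 0 <= alive y.
Proof. exact: ler0n. Qed.

(* Mass conservation: the walk is still alive after [m] steps or has exited by then. *)
Lemma walk_sum_conservation m a : \sum_(c < k) p c = 1 ->
  walk_sum m a alive + \sum_(j < m.+1) walk_sum j a exited = monomial a.
Proof.
move=> p1; elim: m a => [|m IH] a.
  rewrite big_ord1 !walk_sum0 -mulrDl /alive /exited.
  by case: (R a); rewrite /= ?add0r ?addr0 mul1r.
rewrite big_ord_recl; under eq_bigr => j _ do rewrite lift0 walk_sumS.
rewrite walk_sumS walk_sum0 -mulr_sumr addrCA -mulrDr exchange_big /= -big_split /=.
under eq_bigr => c _ do rewrite IH monomial_add_unitv.
rewrite -mulr_sumr p1 mulr1 /exited.
by case: (R a); rewrite /= ?mul0r ?mul1r ?add0r ?addr0.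
Qed.

Lemma walk_sum_exited_tail n N a : (forall c, 0 <= p c) -> \sum_(c < k) p c = 1 ->
  \sum_(j < N) walk_sum (n.+1 + j) a exited <= walk_sum n a alive.
Proof.
move=> p_ge0 p1.
have := walk_sum_conservation (n + N) a p1; have := walk_sum_conservation n a p1.
rewrite -addSn big_split_ord /=.
have := walk_sum_ge0 (n + N) a p_ge0 alive_ge0; lra.
Qed.

Lemma walk_sum_level m a F n : n = (order a + m)%N ->
  walk_sum m a F =
  \sum_(x : {ffun 'I_k -> 'I_n.+1} | order (box_pt x) == n)
     F (box_pt x) * (npaths R a (box_pt x) m)%:R * monomial (box_pt x).
Proof.
move=> ->; set N := (order a + m)%N.
transitivity (\sum_(x : {ffun 'I_k -> 'I_N.+1} | order (box_pt x) == N)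
   \sum_(s : m.-tuple 'I_k | good_path R a (box_pt x) s)
      F (box_pt x) * monomial (box_pt x)); last first.
  apply: eq_bigr => x _; rewrite sumr_const mulrAC mulr_natr; congr (_ *+ _).
  by rewrite npathsE; apply: eq_card.
rewrite /walk_sum big_mkcond /= [RHS]big_mkcond /=.
rewrite (eq_bigr (fun x => \sum_(s : m.-tuple 'I_k)
    (if (order (box_pt x) == N) && good_path R a (box_pt x) s
     then F (box_pt x) * monomial (box_pt x) else 0))); last first.
  by move=> x _; case: ifP => hx; [rewrite big_mkcond | rewrite big1].
rewrite exchange_big /=; apply: eq_bigr => s _.
case hc: [forall j : 'I_m, R (pos a s j)]; last first.
  by rewrite big1 // => x _; rewrite /good_path hc !andbF.
rewrite -big_mkcond /= (big_pred1 (to_box N (pos a s m))) ?to_boxK ?order_pos //.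
move=> x /=; rewrite /good_path hc andbT.
apply/andP/eqP => [[/eqP ho /eqP hx]|->].
  by apply: box_pt_inj; rewrite hx to_boxK // order_pos.
by rewrite to_boxK ?order_pos // eqxx order_pos eqxx.
Qed.

End Walks.

Local Open Scope classical_set_scope.

Lemma level_sumE (Rr : realType) k (P : pred (pt k)) n (f : pt k -> Rr) :
  level_sum P n f = \sum_(x : {ffun 'I_k -> 'I_n.+1} | order (box_pt x) == n)
                      (if P (box_pt x) then f (box_pt x) else 0).
Proof. by rewrite /level_sum big_mkcondr. Qed.

Lemma eq_level_sum (Rr : realType) k (P : pred (pt k)) n (f g : pt k -> Rr) :
  (forall y, P y -> f y = g y) -> level_sum P n f = level_sum P n g.
Proof. by move=> fg; apply: eq_bigr => x /andP[_ /fg]. Qed.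

Section WalkLevels.
Variables (Rr : realType) (k : nat) (R : pred (pt k)) (p : 'I_k -> Rr).
Hypothesis R0 : R (origin k).

Lemma walk_sum_alive_level m :
  walk_sum R p m (origin k) (alive Rr R) = level_sum R m (probP R p).
Proof.
rewrite (walk_sum_level _ _ _ _ (n := m)) ?order_origin // level_sumE.
apply: eq_bigr => x /eqP xm; rewrite /probP /alive -/(monomial p _).
have -> : npaths R (origin k) (box_pt x) m = kcount R (box_pt x) by rewrite /kcount xm.
by case: (R (box_pt x)); rewrite /= ?mul1r // !mul0r.
Qed.

Lemma walk_sum_exited_level m :
  walk_sum R p m (origin k) (exited Rr R) = level_sum (inB R) m (probP R p).
Proof.
rewrite (walk_sum_level _ _ _ _ (n := m)) ?order_origin // level_sumE.
apply: eq_bigr => x /eqP xm; rewrite /probP /exited -/(monomial p _).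
have -> : npaths R (origin k) (box_pt x) m = kcount R (box_pt x) by rewrite /kcount xm.
case yB: (inB R (box_pt x)); first by case/andP: yB => -> _; rewrite mul1r.
case yR: (R (box_pt x)); first by rewrite !mul0r.
have [->|k_gt0] := posnP (kcount R (box_pt x)); first by rewrite mulr0 mul0r.
by move: yB; rewrite (inB_of_kcount R0 k_gt0) ?yR.
Qed.

Lemma walk_sum_kstar_level i n :
  walk_sum R p n (unitv i) (exited Rr R) =
  level_sum (inB R) n.+1 (fun y => (kstar R i y)%:R * monomial p y).
Proof.
rewrite (walk_sum_level _ _ _ _ (n := n.+1)) ?order_unitv // level_sumE.
apply: eq_bigr => x /eqP xn; rewrite /exited.
have -> : npaths R (unitv i) (box_pt x) n = kstar R i (box_pt x) by rewrite /kstar xn.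
case yB: (inB R (box_pt x)); first by case/andP: yB => -> _; rewrite mul1r.
case yR: (R (box_pt x)); first by rewrite !mul0r.
have [k0|k_gt0] := posnP (kcount R (box_pt x)).
  by have := kstar_le R0 i (box_pt x); rewrite k0 leqn0 => /eqP ->; rewrite mulr0 mul0r.
by move: yB; rewrite (inB_of_kcount R0 k_gt0) ?yR.
Qed.

Lemma level_sum_inB0 (f : pt k -> Rr) : level_sum (inB R) 0 f = 0.
Proof.
rewrite /level_sum big_pred0 // => x.
by apply/negP => /andP[/eqP /order_eq0 -> /andP[]]; rewrite R0.
Qed.

Lemma walk_sum_alive_cvg0 : is_param p -> sumB R (probP R p) 1 ->
  (fun m => walk_sum R p m (origin k) (alive Rr R)) @ \oo --> 0.
Proof.
move=> [_ p1] hcl.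
have alive_eq m : walk_sum R p m (origin k) (alive Rr R) =
    1 - \sum_(j < m.+1) level_sum (inB R) j (probP R p).
  rewrite -(monomial_origin p) -(walk_sum_conservation R m (origin k) p1).
  rewrite [X in _ - X](eq_bigr (fun j : 'I_m.+1 =>
    walk_sum R p j (origin k) (exited Rr R))) ?addrK //.
  by move=> j _; rewrite walk_sum_exited_level.
rewrite (boolp.funext alive_eq); rewrite /sumB -cvg_shiftS in hcl.
by have := cvgB (cvg_cst (1 : Rr)) hcl; rewrite subrr; apply.
Qed.

End WalkLevels.

Section Estimator.
Variables (Rr : realType) (k : nat) (R : pred (pt k)).
Hypothesis acc : accessible_region R.

Lemma phat_norm_le1 i y : inB R y -> `|phat Rr R i y| <= 1.
Proof.
move=> yB; have k_gt0 := kcount_gt0 acc.2 yB.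
rewrite /phat ger0_norm ?divr_ge0 ?ler0n // ler_pdivrMr ?ltr0n // mul1r ler_nat.
exact: kstar_le acc.1 _ _.
Qed.

Lemma phat_unbiased i : closed_region Rr R -> unbiased_for R i (phat Rr R i).
Proof.
move=> hcl p hp; have [R0 _] := acc; have [p_gt0 p1] := hp.
have p_ge0 c : 0 <= p c by exact: ltW.
pose A m := walk_sum R p m (unitv i) (alive Rr R).
have phat_term m : level_sum (inB R) m (fun y => phat Rr R i y * probP R p y) =
    level_sum (inB R) m (fun y => (kstar R i y)%:R * monomial p y).
  apply: eq_level_sum => y yB; rewrite /phat /probP -/(monomial p y) mulrA divfK //.
  by rewrite pnatr_eq0 -lt0n; apply: kcount_gt0 acc.2 _.
have partial_eq m :
    \sum_(j < m.+2) level_sum (inB R) j (fun y => phat Rr R i y * probP R p y) = p i - A m.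
  rewrite big_ord_recl level_sum_inB0 // add0r.
  rewrite -(monomial_unitv p i) -(walk_sum_conservation R m (unitv i) p1) addrC addKr.
  by apply: eq_bigr => j _; rewrite phat_term walk_sum_kstar_level.
(* The walk from [e_i] is the first branch of the walk from the origin. *)
have A_cvg0 : A @ \oo --> 0.
  apply: (@squeeze_cvgr _ _ _ _ (fun=> 0)
    (fun m => walk_sum R p m.+1 (origin k) (alive Rr R))); last 2 first.
  - exact: cvg_cst.
  - by rewrite (cvg_shiftS (fun m => walk_sum R p m (origin k) (alive Rr R)));
      exact: walk_sum_alive_cvg0 R0 hp (hcl p hp).
  apply: nearW => m /=; apply/andP; split.
    by apply: walk_sum_ge0 => // y; exact: alive_ge0.
  rewrite walk_sumS R0 mul1r (bigD1 i) //= add_unitv_origin lerDl.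
  by apply: sumr_ge0 => c _; apply: walk_sum_ge0 => // y; exact: alive_ge0.
rewrite /sumB -(cvg_shiftn 2) /=.
rewrite (_ : (fun n => _) = (fun m => p i - A m)); last first.
  by apply: boolp.funext => m; rewrite addn2 partial_eq.
by have := cvgB (cvg_cst (p i)) A_cvg0; rewrite subr0; apply.
Qed.

End Estimator.

Lemma sumB_sub (Rr : realType) k (R : pred (pt k)) (f g : pt k -> Rr) l1 l2 :
  sumB R f l1 -> sumB R g l2 -> sumB R (fun y => f y - g y) (l1 - l2).
Proof.
move=> hf hg; rewrite /sumB (_ : (fun N => _) = (fun N =>
    \sum_(m < N) level_sum (inB R) m f - \sum_(m < N) level_sum (inB R) m g)).
  exact: cvgB.
apply: boolp.funext => N; rewrite -sumrB; apply: eq_bigr => m _.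
by rewrite /level_sum -sumrB.
Qed.

Lemma expRN_le_inv (Rr : realType) (u : Rr) : 0 < u -> expR (- u) <= u^-1.
Proof.
move=> u_gt0; rewrite expRN lef_pV2 ?posrE ?expR_gt0 //.
by have := expR_ge1Dx u; lra.
Qed.

Lemma sum_expR_le (Rr : realType) (X : finType) (P : pred X) (W g : X -> Rr) t :
  0 < t -> (forall x, P x -> 0 <= W x) -> (forall x, P x -> W x != 0 -> 0 < g x) ->
  \sum_(x | P x) W x * expR (- (t * g x)) <= (\sum_(x | P x) W x / g x) / t.
Proof.
move=> t_gt0 W_ge0 g_gt0; rewrite mulr_suml; apply: ler_sum => x Px.
have [->|Wx] := eqVneq (W x) 0; first by rewrite !mul0r.
have tg_gt0 : 0 < t * g x by rewrite mulr_gt0 // g_gt0.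
apply: le_trans (ler_wpM2l (W_ge0 x Px) (expRN_le_inv tg_gt0)) _.
by rewrite invfM mulrA mulrAC.
Qed.

Definition coords (Rr : realType) k (y : pt k) : 'I_k -> Rr := fun c => (y c)%:R.

(* The exponential family [p_c ~ exp (t a_c)] concentrates, as [t] grows, on the
   points of a level maximizing [dot a]. *)
Definition tilt (Rr : realType) k (a : 'I_k -> Rr) t (c : 'I_k) : Rr :=
  expR (t * a c) / \sum_j expR (t * a j).

Lemma tilt_param (Rr : realType) k (a : 'I_k -> Rr) t : (0 < k)%N -> is_param (tilt a t).
Proof.
move=> k_gt0; have Z_gt0 : 0 < \sum_j expR (t * a j).
  rewrite (bigD1 (Ordinal k_gt0)) //=; apply: ltr_pwDl; first exact: expR_gt0.
  by apply: sumr_ge0 => c _; exact: expR_ge0.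
split; first by move=> j; apply: divr_gt0 => //; exact: expR_gt0.
by rewrite /tilt -mulr_suml divff // gt_eqF.
Qed.

Lemma monomial_tilt (Rr : realType) k (a : 'I_k -> Rr) t (y : pt k) :
  monomial (tilt a t) y = expR (t * dot a (coords Rr y)) / (\sum_j expR (t * a j)) ^+ order y.
Proof.
rewrite /monomial /tilt; under eq_bigr do rewrite expr_div_n -expRM_natr -mulrA.
by rewrite prodf_div prodrXr /dot mulr_sumr expR_sum.
Qed.

Lemma exists_div_lt (Rr : realFieldType) (G c : Rr) : 0 < c ->
  exists2 t, 0 < t & G / t < c.
Proof.
move=> c_gt0; have t_gt0 : 0 < `|G| / c + 1 by rewrite ltr_pwDr // divr_ge0 // ltW.
exists (`|G| / c + 1) => //; rewrite ltr_pdivrMr // mulrDr mulr1 mulrC divfK ?gt_eqF //.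
by have := ler_norm G; lra.
Qed.

Lemma probP_tilt (Rr : realType) k (R : pred (pt k)) (a : 'I_k -> Rr) t (y0 y : pt k) :
  order y = order y0 ->
  probP R (tilt a t) y = monomial (tilt a t) y0 *
    ((kcount R y)%:R * expR (- (t * (dot a (coords Rr y0) - dot a (coords Rr y))))).
Proof.
move=> yy0; rewrite /probP -/(monomial _ y) !monomial_tilt yy0.
rewrite (_ : t * dot a _ = t * dot a (coords Rr y0) +
                            - (t * (dot a (coords Rr y0) - dot a (coords Rr y)))).
  by rewrite expRD; ring.
by ring.
Qed.

Lemma probP_ge0 (Rr : realType) k (R : pred (pt k)) (p : 'I_k -> Rr) y :
  (forall c, 0 <= p c) -> 0 <= probP R p y.
Proof. by move=> p_ge0; apply: mulr_ge0; [exact: ler0n | exact: monomial_ge0]. Qed.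

Section Uniqueness.
Variables (Rr : realType) (k : nat) (R : pred (pt k)).
Hypothesis acc : accessible_region R.

Section FirstLevel.
Variables (D : pt k -> Rr) (M : Rr) (n : nat).
Hypotheses (M_ge0 : 0 <= M) (D_le : forall y, inB R y -> `|D y| <= M)
  (D_low : forall y, inB R y -> (order y < n)%N -> D y = 0).

(* The levels above [n] carry at most the mass [M P(the walk is in R at time n)]. *)
Lemma level_sum_first_bound p : is_param p -> sumB R (fun y => D y * probP R p y) 0 ->
  `|level_sum (inB R) n (fun y => D y * probP R p y)| <= M * level_sum R n (probP R p).
Proof.
move=> [p_gt0 p1] D_sum0; have p_ge0 c : 0 <= p c by exact: ltW.
pose L m := level_sum (inB R) m (fun y => D y * probP R p y).
pose E m := walk_sum R p m (origin k) (exited Rr R).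
have L_low m : (m < n)%N -> L m = 0.
  by move=> mn; apply: big1 => x /andP[/eqP xm xB]; rewrite D_low ?mul0r // xm.
have L_le m : `|L m| <= M * E m.
  rewrite /E walk_sum_exited_level ?acc.1 // /L /level_sum mulr_sumr.
  apply: le_trans (ler_norm_sum _ _ _) _; apply: ler_sum => x /andP[_ xB].
  by rewrite normrM [`|probP _ _ _|]ger0_norm ?probP_ge0 // ler_wpM2r ?probP_ge0 ?D_le.
have tail_le N : `|\sum_(j < N) L (n.+1 + j)%N| <= M * level_sum R n (probP R p).
  apply: le_trans (ler_norm_sum _ _ _) _.
  apply: (@le_trans _ _ (\sum_(j < N) M * E (n.+1 + j)%N)).
    by apply: ler_sum => j _; exact: L_le.
  by rewrite -mulr_sumr -walk_sum_alive_level ler_wpM2l // walk_sum_exited_tail.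
have L_n N : `|L n| <= `|\sum_(m < n.+1 + N) L m| + M * level_sum R n (probP R p).
  rewrite big_split_ord /= big_ord_recr /= big1 ?add0r => [|j _]; last exact: L_low.
  have := ler_normB (L n + \sum_(j < N) L (n.+1 + j)%N) (\sum_(j < N) L (n.+1 + j)%N).
  by rewrite addrK; have := tail_le N; lra.
apply/ler_addgt0Pr => e e_gt0.
have [N0 _ hN0] := @cvgr0_norm_lt _ _ _ _ _ _ D_sum0 _ e_gt0.
have /= lt_e := hN0 (n.+1 + N0)%N (leq_addl _ _).
by have := L_n N0; rewrite /L; lra.
Qed.

Lemma level_sum_dominant p y0 :
  is_param p -> sumB R (fun y => D y * probP R p y) 0 -> inB R y0 -> order y0 = n ->
  `|D y0| * probP R p y0 <=
  level_sum (fun y => inB R y && (y != y0)) n (fun y => `|D y| * probP R p y) +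
  M * level_sum R n (probP R p).
Proof.
move=> hp D_sum0 y0B y0n; have p_ge0 c : 0 <= p c by exact/ltW/hp.1.
have := level_sum_first_bound hp D_sum0.
rewrite /level_sum (bigD1 (to_box n y0)) /=; last by rewrite to_boxK // y0n eqxx.
rewrite to_boxK //; set T := \sum_(x | _) _ => bound.
have T_le : `|T| <= \sum_(x : {ffun 'I_k -> 'I_n.+1} |
    (order (box_pt x) == n) && (inB R (box_pt x) && (box_pt x != y0)))
      `|D (box_pt x)| * probP R p (box_pt x).
  rewrite /T; apply: le_trans (ler_norm_sum _ _ _) _.
  rewrite le_eqVlt; apply/orP; left; apply/eqP.
  apply: eq_big => [x|x _]; last by rewrite normrM [`|probP _ _ _|]ger0_norm ?probP_ge0.
  rewrite -andbA; congr [&& _, _ & _]; apply/negb_inj; rewrite !negbK.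
  by apply/eqP/eqP => [->|xy0]; [rewrite to_boxK | apply: box_pt_inj; rewrite to_boxK].
have := ler_normB (D y0 * probP R p y0 + T) T.
rewrite addrK normrM [`|probP _ _ _|]ger0_norm ?probP_ge0 //; lra.
Qed.

End FirstLevel.

Lemma no_exposed_nonzero (D : pt k -> Rr) M n y0 (a : 'I_k -> Rr) : (0 < k)%N ->
  (forall y, inB R y -> `|D y| <= M) ->
  (forall y, inB R y -> (order y < n)%N -> D y = 0) ->
  (forall p, is_param p -> sumB R (fun y => D y * probP R p y) 0) ->
  inB R y0 -> order y0 = n -> D y0 != 0 ->
  (forall y, order y = n -> R y || inB R y && (D y != 0) -> y != y0 ->
     dot a (coords Rr y) < dot a (coords Rr y0)) ->
  False.
Proof.
move=> k_gt0 D_le D_low D_sum0 y0B y0n Dy0 a_max.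
have M_ge0 : 0 <= M := le_trans (normr_ge0 _) (D_le y0 y0B).
pose K y : Rr := (kcount R y)%:R.
pose g y := dot a (coords Rr y0) - dot a (coords Rr y).
pose P1 (x : {ffun 'I_k -> 'I_n.+1}) :=
  (order (box_pt x) == n) && (inB R (box_pt x) && (box_pt x != y0)).
pose P2 (x : {ffun 'I_k -> 'I_n.+1}) := (order (box_pt x) == n) && R (box_pt x).
pose W1 (x : {ffun 'I_k -> 'I_n.+1}) := `|D (box_pt x)| * K (box_pt x).
pose G := \sum_(x | P1 x) W1 x / g (box_pt x) +
          M * \sum_(x | P2 x) K (box_pt x) / g (box_pt x).
pose c0 := `|D y0| * K y0.
have c0_gt0 : 0 < c0.
  by rewrite mulr_gt0 ?normr_gt0 // ltr0n; exact: kcount_gt0 acc.2 y0B.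
have [t t_gt0] := exists_div_lt G c0_gt0; rewrite ltNge => /negP; apply.
pose p := tilt a t; have hp : is_param p := tilt_param a t k_gt0.
have C_gt0 : 0 < monomial p y0 by apply: monomial_gt0; exact: hp.1.
have := level_sum_dominant M_ge0 D_le D_low hp (D_sum0 p hp) y0B y0n.
rewrite (@probP_tilt _ _ R a t y0 y0) // subrr mulr0 oppr0 expR0 mulr1.
have -> : level_sum (fun y => inB R y && (y != y0)) n (fun y => `|D y| * probP R p y) =
    monomial p y0 * \sum_(x | P1 x) W1 x * expR (- (t * g (box_pt x))).
  rewrite /level_sum mulr_sumr; apply: eq_bigr => x /andP[/eqP xn _].
  by rewrite (@probP_tilt _ _ R a t y0) ?xn // /W1 /K; ring.
have -> : level_sum R n (probP R p) =
    monomial p y0 * \sum_(x | P2 x) K (box_pt x) * expR (- (t * g (box_pt x))).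
  rewrite /level_sum mulr_sumr; apply: eq_bigr => x /andP[/eqP xn _].
  by rewrite (@probP_tilt _ _ R a t y0) ?xn.
rewrite mulrCA [M * (_ * _)]mulrCA -mulrDr ler_pM2l // -/c0 => /le_trans; apply.
rewrite mulrDl -mulrA; apply: lerD; last rewrite ler_wpM2l //.
  apply: sum_expR_le t_gt0 _ _ => [x _|x /and3P[/eqP xn xB xy0]]; first by rewrite mulr_ge0.
  rewrite /W1 mulf_eq0 negb_or normr_eq0 => /andP[Dx _].
  by rewrite subr_gt0 a_max // xB Dx orbT.
apply: sum_expR_le t_gt0 _ _ => [x _|x /andP[/eqP xn xR] _]; first exact: ler0n.
rewrite subr_gt0 a_max ?xR //; apply: contraTneq xR => ->.
by case/andP: y0B.
Qed.

Lemma unbiased_zero_eq0 (D : pt k -> Rr) M : (0 < k)%N -> simple_region Rr R ->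
  (forall y, inB R y -> `|D y| <= M) ->
  (forall p, is_param p -> sumB R (fun y => D y * probP R p y) 0) ->
  forall y, inB R y -> D y = 0.
Proof.
move=> k_gt0 simple D_le D_sum0 y yB; apply/eqP; apply: contraT => Dy.
have [y1 /andP[y1B Dy1] y1_min] : exists2 y1, inB R y1 && (D y1 != 0) &
    forall z, inB R z && (D z != 0) -> (order y1 <= order z)%N.
  by apply: exists_minimal_order; exists y; rewrite yB.
set n := order y1.
have D_low z : inB R z -> (order z < n)%N -> D z = 0.
  by move=> zB; apply: contraTeq => Dz; rewrite -leqNgt; apply: y1_min; rewrite zB.
pose f (x : {ffun 'I_k -> 'I_n.+1}) := coords Rr (box_pt x).
have f_inj : injective f.
  move=> x x' fx; apply: box_pt_inj; apply/ffunP => c; apply/eqP.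
  by rewrite -(eqr_nat Rr); apply/eqP; exact: (congr1 (fun u => u c) fx).
pose Rn (x : {ffun 'I_k -> 'I_n.+1}) := (order (box_pt x) == n) && R (box_pt x).
pose S (x : {ffun 'I_k -> 'I_n.+1}) :=
  (order (box_pt x) == n) && (inB R (box_pt x) && (D (box_pt x) != 0)).
have S_not_conv x : S x -> ~ in_conv Rn f (f x).
  by case/and3P => /eqP xn /andP[xR _] _; exact: simple xn xR.
have S1 : S (to_box n y1) by rewrite /S to_boxK // eqxx y1B.
have [x0 /and3P[/eqP x0n x0B Dx0] [a a_max]] := exposed_point f_inj S1 S_not_conv.
exfalso; apply: (no_exposed_nonzero k_gt0 D_le D_low D_sum0 x0B x0n Dx0 (a := a)).
move=> z zn zRS zx0.
have := a_max (to_box n z); rewrite /f to_boxK //; apply.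
  by rewrite /Rn /S to_boxK // zn eqxx.
by apply: contra zx0 => /eqP <-; rewrite to_boxK.
Qed.

End Uniqueness.

Theorem theorem2 (Rr : realType) (k : nat) (R : pred (pt k)) :
  (2 <= k)%N -> accessible_region R -> simple_region Rr R -> closed_region Rr R ->
  forall i : 'I_k,
    (bounded_on_B R (phat Rr R i) /\ unbiased_for R i (phat Rr R i)) /\
    (forall U : pt k -> Rr, bounded_on_B R U -> unbiased_for R i U ->
       forall y, inB R y -> U y = phat Rr R i y).
Proof.
move=> k_ge2 acc simple closed i; split; first split.
- by exists 1 => y; exact: phat_norm_le1.
- exact: phat_unbiased.
move=> U [M U_le] U_unb y yB; apply/eqP; rewrite -subr_eq0; apply/eqP; move: y yB.
apply: (unbiased_zero_eq0 acc (M := M + 1) (ltnW k_ge2) simple) => [y yB|p hp].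
  apply: le_trans (ler_normB _ _) _.
  by apply: lerD; [exact: U_le | exact: phat_norm_le1].
rewrite (_ : (fun y => _) =
  (fun y => U y * probP R p y - phat Rr R i y * probP R p y)).
  by rewrite -(subrr (p i)); apply: sumB_sub; [exact: U_unb | exact: phat_unbiased].
by apply: boolp.funext => y; rewrite mulrBl.
Qed.
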